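(* Fix positive integers $n$ and $k$. Among all sequences $(a_1,\dots,a_k)$ of positive integers with $\sum_{i=1}^k a_i=n$ that arise as the sequence of step sizes in the construction of some $k$-atom on $n$ vertices, every sequence minimizing $\sum_{1\le i<j\le k}\sqrt{a_i/a_j}$ is non-decreasing.
   Context: $k$-atoms are built recursively in $k$ steps: step $1$ creates a single vertex ($K_1$, the only $1$-atom). At step $i+1$, from an $i$-atom $A_i$ one obtains an $(i+1)$-atom by adding a new independent set $I$ such that each vertex of $A_i$ has exactly one neighbor in $I$ and each vertex of $I$ has at least one neighbor in $A_i$. The step sizes are $a_1=1$ and $a_{i+1}=|I|$ for the set added at step $i+1$, so that $\sum_i a_i$ is the number of vertices of the resulting $k$-atom. *)

From HB Require Import structures.
From mathcomp Require Import all_boot all_order all_algebra.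
From mathcomp Require Import reals.
Set Implicit Arguments. Unset Strict Implicit. Unset Printing Implicit Defensive.
Import Order.TTheory GRing.Theory Num.Theory.

(* Step sizes a = [:: a_1; ...; a_k] are stored 0-indexed: a_{i+1} = nth 0 a i.
   Vertices of the atom are the naturals 0 .. (sumn a) - 1; the vertices added
   at (0-indexed) step j form the block [pre a j, pre a j.+1), where
   pre a j = a_1 + ... + a_j.  Any k-atom is isomorphic to one labelled this
   way, so this labelling loses no generality. *)
Definition pre (a : seq nat) (j : nat) : nat := \sum_(i < j) nth 0 a i.

Definition in_block (a : seq nat) (j v : nat) : bool := (pre a j <= v) && (v < pre a j.+1).

Definition atom_construction (a : seq nat) (e : rel nat) : Prop :=
  symmetric e /\
      nth 0 a 0 = 1 /\
      (forall u v, e u v -> (u < sumn a) && (v < sumn a)) /\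
      (forall j u v, j < size a -> in_block a j u -> in_block a j v -> ~~ e u v) /\
      (forall j u, 0 < j < size a -> u < pre a j ->
         exists! v, in_block a j v /\ e u v) /\
      (forall j v, 0 < j < size a -> in_block a j v ->
         exists u, u < pre a j /\ e u v).

Definition atom_steps (a : seq nat) : Prop := exists e : rel nat, atom_construction a e.

Definition cost (R : realType) (a : seq nat) : R :=
  (\sum_(i < size a) \sum_(j < size a | (i < j)%N)
      Num.sqrt ((nth 0 a i)%:R / (nth 0 a j)%:R))%R.

(* A sequence of positive step sizes comes from an atom exactly when a_1 = 1
   and a_(j+1) <= a_1 + ... + a_j: picking a neighbour in A_j for every new
   vertex is injective, and conversely joining the u-th old vertex to the
   min(u, a_(j+1) - 1)-th new one realises every such sequence.  Swapping an
   adjacent descent a_i > a_(i+1) (necessarily i > 1, as a_1 = 1) keeps this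
   condition, the length and the sum, and changes the cost by
   sqrt(a_(i+1)/a_i) - sqrt(a_i/a_(i+1)) < 0; so a minimiser has no descent. *)

From HB Require Import structures.
From mathcomp Require Import all_boot all_order all_algebra.
From mathcomp Require Import reals.
From mathcomp Require Import lra zify.
Set Implicit Arguments. Unset Strict Implicit. Unset Printing Implicit Defensive.
Import Order.TTheory GRing.Theory Num.Theory.

Lemma preS a j : pre a j.+1 = pre a j + nth 0 a j.
Proof. by rewrite /pre big_ord_recr. Qed.

Lemma pre_sumn_take a j : pre a j = sumn (take j a).
Proof.
elim: j => [|j IH]; first by rewrite /pre big_ord0 take0.
rewrite preS IH; case: (ltnP j (size a)) => hj.
  by rewrite (take_nth 0 hj) -cats1 sumn_cat /= addn0.
by rewrite nth_default // !take_oversize ?addn0 //; exact: leqW.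
Qed.

Lemma pre_size a : pre a (size a) = sumn a.
Proof. by rewrite pre_sumn_take take_size. Qed.

Lemma leq_pre a j j' : j <= j' -> pre a j <= pre a j'.
Proof.
move=> /subnKC <-; elim: (j' - j) => [|d IH]; first by rewrite addn0.
by rewrite addnS preS; apply: leq_trans IH (leq_addr _ _).
Qed.

Lemma in_block_uniq a j j' v : in_block a j v -> in_block a j' v -> j = j'.
Proof.
rewrite /in_block => /andP[h1 h2] /andP[h3 h4].
by case: (ltngtP j j') => // /leq_pre => /(_ a); lia.
Qed.

Definition atom_feasible (a : seq nat) : Prop :=
  forall j, 0 < j < size a -> nth 0 a j <= pre a j.

Lemma atom_construction_feasible a e : atom_construction a e -> atom_feasible a.
Proof.
move=> [_ [_ [_ [_ [neigh_uniq neigh_ex]]]]] j hj.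
set P := pre a j; set A := nth 0 a j.
have hb v : v < A -> in_block a j (P + v).
  by move=> hv; rewrite /in_block preS -/P -/A; lia.
have has_neigh v : v < A -> has (fun u => e u (P + v)) (iota 0 P).
  move=> /hb /(neigh_ex _ _ hj) [u [hu he]].
  by apply/hasP; exists u => //; rewrite mem_iota.
(* Choosing a neighbour in A_j for each vertex of the block is injective,
   since each vertex of A_j has a single neighbour there. *)
pose f v := find (fun u => e u (P + v)) (iota 0 P).
have f_lt v : v < A -> f v < P.
  by move=> /has_neigh; rewrite has_find size_iota.
have f_edge v : v < A -> e (f v) (P + v).
  move=> hv; have := nth_find 0 (has_neigh v hv).
  by rewrite nth_iota ?f_lt // add0n.
have <- : size (map f (iota 0 A)) = A by rewrite size_map size_iota.
rewrite -(size_iota 0 P); apply: uniq_leq_size.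
  rewrite map_inj_in_uniq ?iota_uniq // => v1 v2.
  rewrite !mem_iota !add0n /= => h1 h2 eqf.
  have [v0 [_ hv0]] := neigh_uniq j (f v1) hj (f_lt _ h1).
  have e1 := hv0 (P + v1) (conj (hb _ h1) (f_edge _ h1)).
  have e2 := hv0 (P + v2) (conj (hb _ h2) _).
  rewrite eqf in e2; have := e2 (f_edge _ h2); lia.
move=> u /mapP[v]; rewrite !mem_iota !add0n => hv ->.
by rewrite f_lt.
Qed.

Definition greedy_edge (a : seq nat) (u v : nat) : bool :=
  has (fun j => [&& u < pre a j, in_block a j v &
                    v == pre a j + minn u (nth 0 a j).-1]) (iota 0 (size a)).

Lemma greedy_edgeE a j u v : j < size a -> in_block a j v ->
  greedy_edge a u v = (u < pre a j) && (v == pre a j + minn u (nth 0 a j).-1).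
Proof.
move=> hj hv; rewrite /greedy_edge.
apply/hasP/andP => [[j' _ /and3P[hu hv' /eqP ->]]|[hu hv']].
  by rewrite (in_block_uniq hv hv') hu eqxx.
by exists j; rewrite ?mem_iota ?hu ?hv.
Qed.

Lemma greedy_edge_lt a u v : greedy_edge a u v -> u < v.
Proof. by move=> /hasP[j _ /and3P[hu _ /eqP ->]]; lia. Qed.

Lemma greedy_edge_sumn a u v : greedy_edge a u v -> v < sumn a.
Proof.
move=> /hasP[j]; rewrite mem_iota add0n => hj /and3P[_ + _].
by rewrite /in_block -pre_size => /andP[_ /leq_trans]; apply; apply: leq_pre.
Qed.

Lemma greedy_edge_block a j u v : in_block a j u -> in_block a j v ->
  ~~ greedy_edge a u v.
Proof.
move=> hu hv; apply/hasP => -[j' _ /and3P[hu' hv' _]].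
by move: hu hu'; rewrite /in_block (in_block_uniq hv' hv); lia.
Qed.

Definition greedy_atom (a : seq nat) : rel nat :=
  fun u v => greedy_edge a u v || greedy_edge a v u.

Lemma greedy_atom_construction a :
  nth 0 a 0 = 1 -> all (fun x => 0 < x) a -> atom_feasible a ->
  atom_construction a (greedy_atom a).
Proof.
move=> h0 hpos hf; split; first by move=> u v; rewrite /greedy_atom orbC.
split=> //; split.
  move=> u v /orP[] huv;
    by move: (greedy_edge_lt huv) (greedy_edge_sumn huv); lia.
split.
  move=> j u v _ hu hv.
  by rewrite negb_or (greedy_edge_block hu hv) (greedy_edge_block hv hu).
split.
  move=> j u /andP[_ hj] hu.
  have ha : 0 < nth 0 a j by apply: (all_nthP 0 hpos).
  have hb : in_block a j (pre a j + minn u (nth 0 a j).-1).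
    by rewrite /in_block preS; lia.
  exists (pre a j + minn u (nth 0 a j).-1); split.
    by split; rewrite // /greedy_atom (greedy_edgeE _ hj hb) hu eqxx.
  move=> v [hv /orP[]].
    by rewrite (greedy_edgeE _ hj hv) => /andP[_ /eqP].
  by move: hv => /andP[hv _] /greedy_edge_lt; lia.
move=> j v /andP[hj0 hj] hv.
have hfj : nth 0 a j <= pre a j by apply: hf; rewrite hj0 hj.
exists (v - pre a j); move: (hv); rewrite /in_block preS => hv'.
split; first lia.
rewrite /greedy_atom (greedy_edgeE _ hj hv).
by apply/orP; left; apply/andP; split; lia.
Qed.

Lemma atom_stepsP a : all (fun x => 0 < x) a ->
  atom_steps a <-> nth 0 a 0 = 1 /\ atom_feasible a.
Proof.
move=> hpos; split.
  move=> [e he]; split; first exact: he.2.1.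
  exact: atom_construction_feasible he.
by move=> [h0 hf]; exists (greedy_atom a); exact: greedy_atom_construction.
Qed.

Lemma perm_cat_swap (T : eqType) (p q : seq T) x y :
  perm_eq (p ++ x :: y :: q) (p ++ y :: x :: q).
Proof. by rewrite perm_cat2l; exact: (permEl (perm_catCA [:: x] [:: y] q)). Qed.

Lemma atom_feasible_swap p x y q : 0 < size p -> y <= x ->
  atom_feasible (p ++ x :: y :: q) -> atom_feasible (p ++ y :: x :: q).
Proof.
move=> hp hyx hf.
have hx : x <= sumn p.
  have := hf (size p).
  rewrite pre_sumn_take take_size_cat // nth_cat ltnn subnn size_cat /=.
  by apply; lia.
move=> j; have := hf j; rewrite !pre_sumn_take !take_cat !nth_cat !size_cat /=.
case: (ltnP j (size p)) => hjp hfj hj; first by apply: hfj; lia.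
move: {hfj}(hfj hj); rewrite -(subnKC hjp) addKn.
by case: (j - size p) => [|[|d]] /=; rewrite !sumn_cat /=; lia.
Qed.

Lemma atom_steps_swap p x y q : 0 < size p -> y <= x ->
  all (fun z => 0 < z) (p ++ x :: y :: q) ->
  atom_steps (p ++ x :: y :: q) -> atom_steps (p ++ y :: x :: q).
Proof.
move=> hp hyx pos_a /(atom_stepsP pos_a)[a0 feas_a].
apply/atom_stepsP; first by rewrite -(perm_all _ (perm_cat_swap p q x y)).
by split; [move: a0; rewrite !nth_cat hp | exact: atom_feasible_swap].
Qed.

Section Cost.
Local Open Scope ring_scope.
Variable R : realType.

Definition sqrt_ratio (x y : nat) : R := Num.sqrt (x%:R / y%:R).

Lemma cost_cons x l : cost R (x :: l) = \sum_(z <- l) sqrt_ratio x z + cost R l.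
Proof.
rewrite /cost /=; under eq_bigr do rewrite big_mkcond /=.
rewrite big_ord_recl /= big_ord_recl /= add0r; congr (_ + _).
  by rewrite (big_nth 0) big_mkord.
apply: eq_bigr => i _; rewrite big_ord_recl /= add0r [RHS]big_mkcond.
by apply: eq_bigr => j _; rewrite /bump /= !add1n ltnS.
Qed.

Lemma cost_swap p x y q :
  cost R (p ++ y :: x :: q) =
  cost R (p ++ x :: y :: q) + sqrt_ratio y x - sqrt_ratio x y.
Proof.
elim: p => [|w p IH] /=; first by rewrite !cost_cons !big_cons; lra.
by rewrite !cost_cons IH (perm_big _ (perm_cat_swap p q y x)); lra.
Qed.

Lemma sqrt_ratio_lt x y :
  (0 < y)%N -> (y < x)%N -> sqrt_ratio y x < sqrt_ratio x y.
Proof.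
move=> hy hyx; have hx := ltn_trans hy hyx.
rewrite /sqrt_ratio ltr_sqrt ?divr_gt0 ?ltr0n //.
apply: (@lt_trans _ _ 1).
  by rewrite ltr_pdivrMr ?ltr0n // mul1r ltr_nat.
by rewrite ltr_pdivlMr ?ltr0n // mul1r ltr_nat.
Qed.

End Cost.

Theorem lemma4 (R : realType) (n k : nat) (hn : (0 < n)%N) (hk : (0 < k)%N)
  (a : seq nat) :
  size a = k -> all (fun x => 0 < x)%N a -> sumn a = n -> atom_steps a ->
  (forall b : seq nat, size b = k -> all (fun x => 0 < x)%N b -> sumn b = n ->
     atom_steps b -> (cost R a <= cost R b)%R) ->
  sorted leq a.
Proof.
move=> size_a pos_a sum_a steps_a a_min.
have [a0 _] := (atom_stepsP pos_a).1 steps_a.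
apply/(sortedP 0) => i i_lt; rewrite leqNgt; apply/negP => descent.
have i_gt0 : 0 < i.
  case: i i_lt descent => // i_lt; rewrite a0 ltnS leqn0 => /eqP a1.
  by have := all_nthP 0 pos_a 1 i_lt; rewrite a1.
have [p [x [y [q [a_eq p_gt0 y_gt0 yx]]]]] :
    exists p x y q, [/\ a = p ++ x :: y :: q, 0 < size p, 0 < y & y < x].
  exists (take i a), (nth 0 a i), (nth 0 a i.+1), (drop i.+2 a).
  rewrite -(drop_nth 0 i_lt) -(drop_nth 0 (ltnW i_lt)) cat_take_drop.
  by rewrite size_takel ?(all_nthP 0 pos_a) // ltnW // ltnW.
subst a; have perm_ab := perm_cat_swap p q x y.
have := a_min _ _ _ _ (atom_steps_swap p_gt0 (ltnW yx) pos_a steps_a).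
rewrite -(perm_size perm_ab) -(perm_all _ perm_ab) -(perm_sumn perm_ab).
rewrite cost_swap => /(_ size_a pos_a sum_a).
by have := sqrt_ratio_lt R y_gt0 yx; lra.
Qed.
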